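(* Let $A$ be a commutative associative 0-dialgebra with involution over a field $\mathbb{F}$. On $A\oplus A$ define $(a,b)\dashv(c,d)=(a\dashv c-d\vdash b^\ast,\; a^\ast\dashv d+c\vdash b)$, $(a,b)\vdash(c,d)=(a\vdash c-d\dashv b^\ast,\; a^\ast\vdash d+c\dashv b)$ and $(a,b)^\ast=(a^\ast,-b)$. Then $A\oplus A$ with these operations is an associative 0-dialgebra with involution.
   Context: A 0-dialgebra is a vector space with bilinear operations $\dashv,\vdash$ satisfying $a\dashv(b\dashv c)=a\dashv(b\vdash c)$ and $(a\dashv b)\vdash c=(a\vdash b)\vdash c$. It is commutative if $a\dashv b=b\vdash a$ for all $a,b$. It is associative if $(a\dashv b)\dashv c=a\dashv(b\dashv c)$, $(a\vdash b)\dashv c=a\vdash(b\dashv c)$ and $(a\vdash b)\vdash c=a\vdash(b\vdash c)$ for all $a,b,c$. An involution is a linear map $\ast$ with $(a^\ast)^\ast=a$, $(a\dashv b)^\ast=b^\ast\vdash a^\ast$, $(a\vdash b)^\ast=b^\ast\dashv a^\ast$. *)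

From HB Require Import structures.
From mathcomp Require Import all_boot all_order all_algebra.
Set Implicit Arguments. Unset Strict Implicit. Unset Printing Implicit Defensive.
Import GRing.Theory.
Local Open Scope ring_scope.

Section Dialg.
Variables (F : fieldType) (V : lmodType F).

Definition bilinear_op (op : V -> V -> V) : Prop :=
  (forall (k : F) (x y z : V), op (k *: x + y) z = k *: op x z + op y z) /\
  (forall (k : F) (x y z : V), op z (k *: x + y) = k *: op z x + op z y).

Definition linear_map (f : V -> V) : Prop :=
  forall (k : F) (x y : V), f (k *: x + y) = k *: f x + f y.

(* 0-dialgebra: bilinear dashv (dl), vdash (dr) with the two 0-dialgebra identities *)
Definition is_0dialgebra (dl dr : V -> V -> V) : Prop :=
  [/\ bilinear_op dl, bilinear_op dr,
      (forall a b c, dl a (dl b c) = dl a (dr b c)) &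
      (forall a b c, dr (dl a b) c = dr (dr a b) c)].

Definition dialg_commutative (dl dr : V -> V -> V) : Prop :=
  forall a b, dl a b = dr b a.

Definition dialg_associative (dl dr : V -> V -> V) : Prop :=
  [/\ (forall a b c, dl (dl a b) c = dl a (dl b c)),
      (forall a b c, dl (dr a b) c = dr a (dl b c)) &
      (forall a b c, dr (dr a b) c = dr a (dr b c))].

Definition dialg_involution (dl dr : V -> V -> V) (s : V -> V) : Prop :=
  [/\ linear_map s, (forall a, s (s a) = a),
      (forall a b, s (dl a b) = dr (s b) (s a)) &
      (forall a b, s (dr a b) = dl (s b) (s a))].
End Dialg.

Section Double.
Variables (F : fieldType) (V : lmodType F).
Variables (dl dr : V -> V -> V) (s : V -> V).

Definition dbl_dl (x y : V * V) : V * V :=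
  (dl x.1 y.1 - dr y.2 (s x.2), dl (s x.1) y.2 + dr y.1 x.2).
Definition dbl_dr (x y : V * V) : V * V :=
  (dr x.1 y.1 - dl y.2 (s x.2), dr (s x.1) y.2 + dl y.1 x.2).
Definition dbl_inv (x : V * V) : V * V := (s x.1, - x.2).
End Double.

From HB Require Import structures.
From mathcomp Require Import all_boot all_order all_algebra.
Set Implicit Arguments. Unset Strict Implicit. Unset Printing Implicit Defensive.
Import GRing.Theory.
Local Open Scope ring_scope.

(* Commutativity makes [b |- a] the opposite product [a -| b], so everything
   is expressed through the single product [a -| b], which is associative and,
   by the first 0-dialgebra identity, satisfies [a -| (b -| c) = a -| (c -| b)];
   the involution becomes a multiplicative, linear, involutive map.  Expanding
   the doubled operations bilinearly, every required identity becomes an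
   equality of two signed sums of triple products [a -| (b -| c)], which agree
   term by term once the two inner factors are allowed to commute. *)

Lemma scale_pair (R : nzRingType) (U W : lmodType R) k (u : U) (w : W) :
  k *: (u, w) = (k *: u, k *: w).
Proof. by []. Qed.

Lemma add_pair (U W : zmodType) (u u' : U) (w w' : W) :
  (u, w) + (u', w') = (u + u', w + w').
Proof. by []. Qed.

Section Bilinear.
Variables (F : fieldType) (V : lmodType F) (op : V -> V -> V).
Hypothesis opB : bilinear_op op.

Lemma bilinDl x y z : op (x + y) z = op x z + op y z.
Proof. by have := opB.1 1 x y z; rewrite !scale1r. Qed.

Lemma bilinDr x y z : op z (x + y) = op z x + op z y.
Proof. by have := opB.2 1 x y z; rewrite !scale1r. Qed.

Lemma bilin0l z : op 0 z = 0.
Proof. by apply: (addrI (op 0 z)); rewrite addr0 -bilinDl addr0. Qed.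

Lemma bilin0r z : op z 0 = 0.
Proof. by apply: (addrI (op z 0)); rewrite addr0 -bilinDr addr0. Qed.

Lemma bilinNl x z : op (- x) z = - op x z.
Proof. by apply/eqP; rewrite -addr_eq0 -bilinDl addNr bilin0l. Qed.

Lemma bilinNr x z : op z (- x) = - op z x.
Proof. by apply/eqP; rewrite -addr_eq0 -bilinDr addNr bilin0r. Qed.

Lemma bilinZl k x z : op (k *: x) z = k *: op x z.
Proof. by have := opB.1 k x 0 z; rewrite !addr0 bilin0l addr0. Qed.

Lemma bilinZr k x z : op z (k *: x) = k *: op z x.
Proof. by have := opB.2 k x 0 z; rewrite !addr0 bilin0r addr0. Qed.

End Bilinear.

Section Linear.
Variables (F : fieldType) (V : lmodType F) (f : V -> V).
Hypothesis fL : linear_map f.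

Lemma lin0 : f 0 = 0.
Proof.
by apply: (addrI (f 0)); rewrite addr0 -{1}(scale1r (f 0)) -fL scale1r addr0.
Qed.

Lemma linD x y : f (x + y) = f x + f y.
Proof. by rewrite -{1}(scale1r x) fL scale1r. Qed.

Lemma linN x : f (- x) = - f x.
Proof. by apply/eqP; rewrite -addr_eq0 -linD addNr lin0. Qed.

Lemma linZ k x : f (k *: x) = k *: f x.
Proof. by rewrite -(addr0 (k *: x)) fL lin0 addr0. Qed.

End Linear.

Section Doubling.
Variables (F : fieldType) (V : lmodType F) (dl dr : V -> V -> V) (s : V -> V).
Hypotheses (dlB : bilinear_op dl) (comm : dialg_commutative dl dr)
  (dl_dr : forall a b c, dl a (dl b c) = dl a (dr b c))
  (dlA : forall a b c, dl (dl a b) c = dl a (dl b c))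
  (sL : linear_map s) (sK : involutive s)
  (s_dl : forall a b, s (dl a b) = dr (s b) (s a)).

Local Notation dmull := (dbl_dl dl dr s).
Local Notation dmulr := (dbl_dr dl dr s).
Local Notation dinv := (dbl_inv s).

Lemma drE a b : dr a b = dl b a.
Proof. by rewrite comm. Qed.

Lemma dl_innerC a b c : dl a (dl b c) = dl a (dl c b).
Proof. by rewrite dl_dr drE. Qed.

Lemma s_dl_morph : {morph s : a b / dl a b}.
Proof. by move=> a b; rewrite s_dl drE. Qed.

Ltac expand :=
  rewrite ?scale_pair ?add_pair /dbl_dl /dbl_dr /dbl_inv /=;
  rewrite ?(drE, bilinDl dlB, bilinDr dlB, bilinNl dlB, bilinNr dlB,
            bilinZl dlB, bilinZr dlB, linD sL, linN sL, linZ sL,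
            s_dl_morph, sK, dlA);
  rewrite ?(opprD, opprK, scalerDr, scalerN, addrA).

(* Normalizes modulo [dl_innerC]: of two occurring forms [a -| (b -| c)] and
   [a -| (c -| b)], the first is rewritten into the second. *)
Ltac dl_canon := repeat match goal with |- context [dl ?a (dl ?b ?c)] =>
  match goal with |- context [dl a (dl c b)] =>
    first [constr_eq b c; fail 1 | rewrite (dl_innerC a b c)] end end.

Lemma dbl_dl_bilinear : @bilinear_op F (V * V)%type dmull.
Proof.
by split=> k [x1 x2] [y1 y2] [z1 z2]; expand; congr (_, _);
  rewrite (ACl (1*3*2*4)).
Qed.

Lemma dbl_dr_bilinear : @bilinear_op F (V * V)%type dmulr.
Proof.
by split=> k [x1 x2] [y1 y2] [z1 z2]; expand; congr (_, _);
  rewrite (ACl (1*3*2*4)).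
Qed.

Lemma dbl_inv_linear : @linear_map F (V * V)%type dinv.
Proof. by move=> k [x1 x2] [y1 y2]; expand. Qed.

Lemma dbl_inv_involutive : involutive dinv.
Proof. by move=> [x1 x2]; expand. Qed.

Lemma dbl_inv_dl x y : dinv (dmull x y) = dmulr (dinv y) (dinv x).
Proof. by case: x y => [a1 a2] [b1 b2]; expand; congr (_, _); rewrite addrC. Qed.

Lemma dbl_inv_dr x y : dinv (dmulr x y) = dmull (dinv y) (dinv x).
Proof. by case: x y => [a1 a2] [b1 b2]; expand; congr (_, _); rewrite addrC. Qed.

Lemma dbl_dl_dr x y z : dmull x (dmull y z) = dmull x (dmulr y z).
Proof. by case: x y z => [a1 a2] [b1 b2] [c1 c2]; expand; dl_canon. Qed.

Lemma dbl_dr_dl x y z : dmulr (dmull x y) z = dmulr (dmulr x y) z.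
Proof. by case: x y z => [a1 a2] [b1 b2] [c1 c2]; expand; dl_canon. Qed.

Lemma dbl_dlA x y z : dmull (dmull x y) z = dmull x (dmull y z).
Proof.
by case: x y z => [a1 a2] [b1 b2] [c1 c2]; expand; congr (_, _);
  rewrite (ACl (1*3*4*2)).
Qed.

Lemma dbl_dr_dlA x y z : dmull (dmulr x y) z = dmulr x (dmull y z).
Proof.
by case: x y z => [a1 a2] [b1 b2] [c1 c2]; expand; dl_canon; congr (_, _);
  rewrite (ACl (1*3*4*2)).
Qed.

Lemma dbl_drA x y z : dmulr (dmulr x y) z = dmulr x (dmulr y z).
Proof.
by case: x y z => [a1 a2] [b1 b2] [c1 c2]; expand; congr (_, _);
  rewrite (ACl (1*3*4*2)).
Qed.

End Doubling.

Theorem theorem4p2 (F : fieldType) (V : lmodType F)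
    (dl dr : V -> V -> V) (s : V -> V) :
  is_0dialgebra dl dr -> dialg_commutative dl dr ->
  dialg_associative dl dr -> dialg_involution dl dr s ->
  let W := (V * V)%type in
  [/\ @is_0dialgebra F W (dbl_dl dl dr s) (dbl_dr dl dr s),
      @dialg_associative F W (dbl_dl dl dr s) (dbl_dr dl dr s) &
      @dialg_involution F W (dbl_dl dl dr s) (dbl_dr dl dr s) (dbl_inv s)].
Proof.
move=> [dlB _ dl_dr _] comm [dlA _ _] [sL sK s_dl _] W.
split; split.
- exact: dbl_dl_bilinear.
- exact: dbl_dr_bilinear.
- exact: dbl_dl_dr.
- exact: dbl_dr_dl.
- exact: dbl_dlA.
- exact: dbl_dr_dlA.
- exact: dbl_drA.
- exact: dbl_inv_linear.
- exact: dbl_inv_involutive.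
- exact: dbl_inv_dl.
- exact: dbl_inv_dr.
Qed.
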